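(* In the two-period setting of the context: (i) if $\frac{\hat\ell_n^P}{E_n}+\frac12\ge\frac{\hat\ell^P}{E}$ for all $n$, then for every $\alpha\in[0,1]$ the aggregate peak load at a Nash equilibrium of $\mathcal G^{\mathrm{DP}}_\alpha$ is $\ell^P=\frac E2+\alpha\frac{\hat\ell^P-\hat\ell^O}{2}$; (ii) if $2(N-1)\hat\ell_n^P\ge(\hat\ell^P-\hat\ell^O)-E_n$ for all $n$, then for every $\alpha\in[0,1]$ the aggregate peak load at the Nash equilibrium of $\mathcal G^{\mathrm{HP}}_\alpha$ is $\ell^P=\frac E2+\phi(\alpha)\frac{\hat\ell^P-\hat\ell^O}{2}$, where $\phi(\alpha)=\frac{2\alpha}{(1+\alpha)+(1-\alpha)N}$.
   Context: Two-period setting: users $\mathcal N=\{1,\dots,N\}$, periods $\mathcal H=\{P,O\}$. Each user $n$ has energy demand $E_n>0$ and preferred profile $(\hat\ell_n^P,\hat\ell_n^O)$ with $\hat\ell_n^h\ge0$, $\hat\ell_n^P+\hat\ell_n^O=E_n$; $E=\sum_nE_n$, $\hat\ell^h=\sum_n\hat\ell_n^h$, and $\hat\ell^P\ge\frac E2\ge\hat\ell^O$. Feasible set $\mathcal L_n=\{(\ell_n^P,\ell_n^O):\ell_n^P+\ell_n^O=E_n,\ \ell_n^P,\ell_n^O\ge0\}$; $\ell^h=\sum_n\ell_n^h$. Costs $C_h(x)=x^2$, utilities $u_n(\boldsymbol\ell_n)=-\sum_h(\ell_n^h-\hat\ell_n^h)^2$. DP bill $b_n^{\mathrm{DP}}=\frac{E_n}{E}((\ell^P)^2+(\ell^O)^2)$;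 HP bill $b_n^{\mathrm{HP}}=\sum_h\ell_n^h\ell^h$. In $\mathcal G^{\mathrm{DP}}_\alpha$ (resp. $\mathcal G^{\mathrm{HP}}_\alpha$) user $n$ minimizes $f_n^\alpha=(1-\alpha)b_n-\alpha u_n(\boldsymbol\ell_n)$ over $\mathcal L_n$ with the corresponding bill; Nash equilibria are defined as usual. *)

(* Two-period (P = peak, O = off-peak) energy game. *)
From mathcomp Require Import all_boot all_order all_algebra.
Set Implicit Arguments. Unset Strict Implicit. Unset Printing Implicit Defensive.
Import Order.TTheory GRing.Theory Num.Theory.
Local Open Scope ring_scope.

Section Game.
Variables (R : realFieldType) (N : nat).

Definition agg (f : 'I_N -> R) : R := \sum_(n < N) f n.

Definition upd (f : 'I_N -> R) (n : 'I_N) (x : R) : 'I_N -> R :=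
  fun m => if m == n then x else f m.

Definition feasible_n (E : 'I_N -> R) (n : 'I_N) (x y : R) : Prop :=
  x + y = E n /\ 0 <= x /\ 0 <= y.

Definition util (lhP lhO : 'I_N -> R) (n : 'I_N) (x y : R) : R :=
  - ((x - lhP n) ^+ 2 + (y - lhO n) ^+ 2).

(* DP bill: (E_n / E) * (C_P(l^P) + C_O(l^O)) with C_h(x) = x^2 *)
Definition bill_DP (E lP lO : 'I_N -> R) (n : 'I_N) : R :=
  E n / agg E * ((agg lP) ^+ 2 + (agg lO) ^+ 2).

Definition bill_HP (E lP lO : 'I_N -> R) (n : 'I_N) : R :=
  lP n * agg lP + lO n * agg lO.

Definition cost (bill : ('I_N -> R) -> ('I_N -> R) -> ('I_N -> R) -> 'I_N -> R)
  (alpha : R) (E lhP lhO lP lO : 'I_N -> R) (n : 'I_N) : R :=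
  (1 - alpha) * bill E lP lO n - alpha * util lhP lhO n (lP n) (lO n).

Definition is_NE (bill : ('I_N -> R) -> ('I_N -> R) -> ('I_N -> R) -> 'I_N -> R)
  (alpha : R) (E lhP lhO lP lO : 'I_N -> R) : Prop :=
  (forall n, feasible_n E n (lP n) (lO n)) /\
  forall (n : 'I_N) (x y : R), feasible_n E n x y ->
    cost bill alpha E lhP lhO lP lO n <=
    cost bill alpha E lhP lhO (upd lP n x) (upd lO n y) n.

Definition phi (alpha : R) : R :=
  2 * alpha / ((1 + alpha) + (1 - alpha) * N%:R).

End Game.

(* At a Nash equilibrium, moving t units of user n's load from off-peak to
   peak changes f_n by g_n t + q_n t^2, so g_n >= 0 if the off-peak load is
   positive and g_n <= 0 if the peak load is positive.  For both bills g_n is,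
   up to a positive factor, a_n (l^P - L) + b (l_n^P - x_n) with a_n, b >= 0,
   where L is the claimed aggregate and x_n is a profile summing to L; the
   hypotheses of each part say exactly that 0 <= x_n <= E_n.  If l^P > L, every
   user with positive peak load has l_n^P <= x_n, hence l^P <= L; symmetrically
   l^P < L is impossible. *)

From mathcomp Require Import all_boot all_order all_algebra.
From mathcomp Require Import ring lra.
Set Implicit Arguments. Unset Strict Implicit. Unset Printing Implicit Defensive.
Import Order.TTheory GRing.Theory Num.Theory.
Local Open Scope ring_scope.

Section Aggregates.
Variables (R : realFieldType) (N : nat).
Implicit Types (f g : 'I_N -> R).

Lemma agg_upd f n x : agg (upd f n x) = agg f - f n + x.
Proof.
rewrite /agg (bigD1 n) //= [in RHS](bigD1 n) //= /upd eqxx.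
rewrite (eq_bigr f) => [|i /negbTE -> //]; ring.
Qed.

Lemma upd_same f n x : upd f n x n = x.
Proof. by rewrite /upd eqxx. Qed.

Lemma aggD f g : agg (fun n => f n + g n) = agg f + agg g.
Proof. exact: big_split. Qed.

Lemma aggB f g : agg (fun n => f n - g n) = agg f - agg g.
Proof. exact: sumrB. Qed.

Lemma ler_agg f g : (forall n, f n <= g n) -> agg f <= agg g.
Proof. by move=> fg; apply: ler_sum => n _. Qed.

Lemma agg_gt0 f : (0 < N)%N -> (forall n, 0 < f n) -> 0 < agg f.
Proof.
move=> N_gt0 f_gt0; rewrite /agg (bigD1 (Ordinal N_gt0)) //=.
by rewrite ltr_pwDl // sumr_ge0 // => n _; apply: ltW.
Qed.

End Aggregates.

Lemma quadratic_slope_ge0 (R : realFieldType) (g q h : R) : 0 < h ->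
  (forall s, 0 < s -> s <= h -> 0 <= g * s + q * s ^+ 2) -> 0 <= g.
Proof.
move=> h_gt0 quad_ge0; rewrite leNgt; apply/negP => g_lt0.
have c_gt0 : 0 < `|q| + 1 by rewrite ltr_pwDr ?normr_ge0.
pose s := Num.min h (- g / (`|q| + 1)).
have s_gt0 : 0 < s by rewrite lt_min h_gt0 divr_gt0 // oppr_gt0.
have s_le_h : s <= h by rewrite ge_min lexx.
have : s * (`|q| + 1) <= - g by rewrite -ler_pdivlMr // ge_min lexx orbT.
have := quad_ge0 s s_gt0 s_le_h; have := ler_norm q; nra.
Qed.

Section FirstOrder.
Variables (R : realFieldType) (N : nat).
Variables (bill : ('I_N -> R) -> ('I_N -> R) -> ('I_N -> R) -> 'I_N -> R).
Variables (alpha : R) (E p o lP lO : 'I_N -> R).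

Lemma NE_first_order n (g q : R) :
  is_NE bill alpha E p o lP lO ->
  (forall t, cost bill alpha E p o (upd lP n (lP n + t)) (upd lO n (lO n - t)) n
             - cost bill alpha E p o lP lO n = g * t + q * t ^+ 2) ->
  (lP n < E n -> 0 <= g) /\ (0 < lP n -> g <= 0).
Proof.
case=> feas stable shift; have [sumE [lP_ge0 lO_ge0]] := feas n.
have shift_ge0 t : - lP n <= t -> t <= lO n -> 0 <= g * t + q * t ^+ 2.
  move=> t_ge t_le; rewrite -shift subr_ge0; apply: stable; rewrite /feasible_n; lra.
split=> [lP_lt | lP_gt0].
  by apply: (@quadratic_slope_ge0 _ g q (lO n)) => [|s s_gt0 s_le]; [lra|apply: shift_ge0; lra].
rewrite -oppr_ge0; apply: (@quadratic_slope_ge0 _ (- g) q (lP n)) => // s s_gt0 s_le.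
by have := shift_ge0 (- s); rewrite sqrrN; lra.
Qed.

End FirstOrder.

Section MonotoneMarginals.
Variables (R : realFieldType) (N : nat).
Variables (a : 'I_N -> R) (b : R).
Hypotheses (a_ge0 : forall n, 0 <= a n) (b_ge0 : 0 <= b).
Hypothesis marginal_strict : (forall n, 0 < a n) \/ 0 < b.

Lemma agg_le_of_marginals (x xs : 'I_N -> R) (A : R) :
  (forall n, 0 <= xs n) -> agg xs = A ->
  (forall n, 0 < x n -> a n * (agg x - A) + b * (x n - xs n) <= 0) ->
  agg x <= A.
Proof.
move=> xs_ge0 <- marg_le0; rewrite leNgt; apply/negP => agg_gt.
suff : agg x <= agg xs by rewrite leNgt agg_gt.
apply: ler_agg => n; case: (lerP (x n) 0) => [x_le0 | x_gt0].
  exact: le_trans x_le0 (xs_ge0 n).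
rewrite leNgt; apply/negP => /[dup] x_gt; rewrite -subr_gt0 => dx_gt0.
move: agg_gt; rewrite -subr_gt0 => dagg_gt0.
have := marg_le0 n x_gt0; apply/negP; rewrite -ltNge.
case: marginal_strict => [/(_ n) a_gt0 | b_gt0].
  by rewrite ltr_wpDr ?mulr_ge0 ?mulr_gt0 // ltW.
by rewrite ltr_wpDl ?mulr_ge0 ?mulr_gt0 // ltW.
Qed.

Lemma agg_eq_of_marginals (ub x xs : 'I_N -> R) (A : R) :
  (forall n, 0 <= xs n <= ub n) -> agg xs = A ->
  (forall n, x n < ub n -> 0 <= a n * (agg x - A) + b * (x n - xs n)) ->
  (forall n, 0 < x n -> a n * (agg x - A) + b * (x n - xs n) <= 0) ->
  agg x = A.
Proof.
move=> xs_bnd agg_xs marg_ge0 marg_le0; apply/eqP; rewrite eq_le.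
have -> : agg x <= A.
  by apply: (@agg_le_of_marginals x xs A _ agg_xs) => // n; have /andP[] := xs_bnd n.
(* The reverse inequality is the same bound for the off-peak loads [ub - x]. *)
have : agg (fun n => ub n - x n) <= agg ub - A.
  apply: (@agg_le_of_marginals _ (fun n => ub n - xs n)) => [n | | n].
  - by have /andP[] := xs_bnd n; rewrite subr_ge0.
  - by rewrite aggB agg_xs.
  - by rewrite subr_gt0 aggB => /marg_ge0; lra.
by rewrite aggB; lra.
Qed.

End MonotoneMarginals.

Section UnilateralShift.
Variables (R : realFieldType) (N : nat) (alpha : R) (E p o lP lO : 'I_N -> R).
Variable n : 'I_N.

Local Notation shift_gain bill t :=
  (cost bill alpha E p o (upd lP n (lP n + t)) (upd lO n (lO n - t)) n
   - cost bill alpha E p o lP lO n).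

Lemma cost_shift_DP t : shift_gain (@bill_DP R N) t =
  ((1 - alpha) * (E n / agg E) * (2 * (agg lP - agg lO))
     + 2 * alpha * (lP n - p n - (lO n - o n))) * t
  + ((1 - alpha) * (E n / agg E) * 2 + 2 * alpha) * t ^+ 2.
Proof. by rewrite /cost /bill_DP /util !agg_upd !upd_same; ring. Qed.

Lemma cost_shift_HP t : shift_gain (@bill_HP R N) t =
  ((1 - alpha) * (agg lP + lP n - agg lO - lO n)
     + 2 * alpha * (lP n - p n - (lO n - o n))) * t + 2 * t ^+ 2.
Proof. by rewrite /cost /bill_HP /util !agg_upd !upd_same; ring. Qed.

End UnilateralShift.

Section TwoPeriodGame.
Variables (R : realFieldType) (N : nat) (E p o : 'I_N -> R).
Hypotheses (N_gt0 : (0 < N)%N) (E_gt0 : forall n, 0 < E n).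
Hypothesis pref : forall n, 0 <= p n /\ 0 <= o n /\ p n + o n = E n.
Hypothesis peak_pref : agg E / 2 <= agg p.

Lemma agg_pref : agg p + agg o = agg E.
Proof. by rewrite -aggD; apply: eq_bigr => n _; have [_ []] := pref n. Qed.

Lemma pref_excess_ge0 : 0 <= agg p - agg o.
Proof. by have := agg_pref; have := peak_pref; lra. Qed.

Lemma aggE_neq0 : agg E != 0.
Proof. by rewrite gt_eqF // agg_gt0. Qed.

Lemma NE_agg_load bill alpha lP lO : is_NE bill alpha E p o lP lO ->
  agg lP + agg lO = agg E.
Proof. by case=> feas _; rewrite -aggD; apply: eq_bigr => n _; case: (feas n). Qed.

Definition DP_peak (alpha : R) : R := agg E / 2 + alpha * ((agg p - agg o) / 2).

Definition HP_peak (alpha : R) : R :=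
  agg E / 2 + phi N alpha * ((agg p - agg o) / 2).

(* [DP_target alpha n], like [HP_target alpha n] below, is user n's equilibrium
   peak load: its marginal cost vanishes there once the aggregate is on target. *)
Definition DP_target (alpha : R) (n : 'I_N) : R :=
  p n - (1 - alpha) * (E n / agg E * ((agg p - agg o) / 2)).

Lemma agg_DP_target (alpha : R) : agg (DP_target alpha) = DP_peak alpha.
Proof.
rewrite /DP_target /DP_peak aggB /agg -mulr_sumr -!mulr_suml.
by rewrite -/(agg p) -/(agg o) -/(agg E) mulfV ?aggE_neq0 // -agg_pref; field.
Qed.

Lemma DP_target_bounds (alpha : R) n :
  (forall n, agg p / agg E <= p n / E n + 1 / 2) -> 0 <= alpha <= 1 ->
  0 <= DP_target alpha n <= E n.
Proof.
move=> interior /andP[alpha_ge0 alpha_le1]; have [_ [o_ge0 pE]] := pref n.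
set X := E n / agg E * ((agg p - agg o) / 2).
have X_ge0 : 0 <= X.
  by rewrite mulr_ge0 ?divr_ge0 ?pref_excess_ge0 ?ltW ?agg_gt0.
have X_le : X <= p n.
  have agg_o : agg o = agg E - agg p by rewrite -agg_pref; ring.
  have -> : X = agg p / agg E * E n - E n / 2.
    by rewrite /X agg_o; field; rewrite aggE_neq0.
  have := ler_wpM2r (ltW (E_gt0 n)) (interior n).
  rewrite mulrDl divfK ?gt_eqF //; lra.
rewrite /DP_target -/X; apply/andP; split; nra.
Qed.

Lemma NE_DP_marginal (alpha : R) lP lO : is_NE (@bill_DP R N) alpha E p o lP lO ->
  forall n,
  (lP n < E n -> 0 <= (1 - alpha) * (E n / agg E) * (agg lP - DP_peak alpha)
                      + alpha * (lP n - DP_target alpha n)) /\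
  (0 < lP n -> (1 - alpha) * (E n / agg E) * (agg lP - DP_peak alpha)
                 + alpha * (lP n - DP_target alpha n) <= 0).
Proof.
move=> ne n; have [feas _] := ne; have [_ [_ pE]] := pref n; have [lE _] := feas n.
have agg_lO : agg lO = agg E - agg lP by rewrite -(NE_agg_load ne); ring.
have marginal_eq :
    (1 - alpha) * (E n / agg E) * (2 * (agg lP - agg lO))
      + 2 * alpha * (lP n - p n - (lO n - o n))
    = 4 * ((1 - alpha) * (E n / agg E) * (agg lP - DP_peak alpha)
           + alpha * (lP n - DP_target alpha n)).
  rewrite agg_lO -[lO n](addKr (lP n)) -[o n](addKr (p n)) lE pE.
  by rewrite /DP_peak /DP_target; field; rewrite aggE_neq0.
have := NE_first_order ne (cost_shift_DP alpha E p o lP lO n).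
by rewrite marginal_eq pmulr_rge0 ?pmulr_rle0.
Qed.

Lemma DP_peak_load (alpha : R) lP lO :
  (forall n, agg p / agg E <= p n / E n + 1 / 2) -> 0 <= alpha <= 1 ->
  is_NE (@bill_DP R N) alpha E p o lP lO -> agg lP = DP_peak alpha.
Proof.
move=> interior alpha01 ne; have /andP[alpha_ge0 alpha_le1] := alpha01.
have share_gt0 n : 0 < E n / agg E by rewrite divr_gt0 ?agg_gt0.
apply: (@agg_eq_of_marginals _ _ (fun n => (1 - alpha) * (E n / agg E)) alpha
          _ _ _ E lP (DP_target alpha)) => //.
- by move=> n; rewrite mulr_ge0 ?subr_ge0 // ltW.
- have [alpha_gt0 | alpha_le0] := ltrP 0 alpha; [by right | left=> n].
  by rewrite mulr_gt0 // subr_gt0 (le_lt_trans alpha_le0).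
- by move=> n; apply: DP_target_bounds.
- exact: agg_DP_target.
- by move=> n; have [+ _] := NE_DP_marginal ne n.
- by move=> n; have [_ +] := NE_DP_marginal ne n.
Qed.

Definition HP_target (alpha : R) (n : 'I_N) : R :=
  (4 * alpha * p n + (1 - alpha) * (E n - phi N alpha * (agg p - agg o)))
  / (2 * (1 + alpha)).

Lemma phi_denom_gt0 (alpha : R) : 0 <= alpha <= 1 ->
  0 < (1 + alpha) + (1 - alpha) * N%:R.
Proof.
case/andP=> alpha_ge0 alpha_le1.
have : 0 <= (1 - alpha) * N%:R by rewrite mulr_ge0 ?subr_ge0.
lra.
Qed.

Lemma agg_HP_target (alpha : R) : 0 <= alpha <= 1 ->
  agg (HP_target alpha) = HP_peak alpha.
Proof.
move=> alpha01; have K_gt0 := phi_denom_gt0 alpha01.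
have /andP[alpha_ge0 _] := alpha01.
rewrite /HP_target /HP_peak /phi /agg -mulr_suml big_split /= -!mulr_sumr sumrB.
rewrite sumr_const card_ord -/(agg p) -/(agg o) -/(agg E) -agg_pref.
by field; rewrite !gt_eqF //; lra.
Qed.

Lemma HP_target_bounds (alpha : R) n :
  (forall n, (agg p - agg o) - E n <= 2 * (N%:R - 1) * p n) -> 0 <= alpha <= 1 ->
  0 <= HP_target alpha n <= E n.
Proof.
move=> interior alpha01; have /andP[alpha_ge0 alpha_le1] := alpha01.
have K_gt0 := phi_denom_gt0 alpha01; have [p_ge0 [o_ge0 pE]] := pref n.
have E_n_gt0 := E_gt0 n; have excess_ge0 := pref_excess_ge0.
have phi_ge0 : 0 <= phi N alpha by rewrite divr_ge0 ?mulr_ge0 // ltW.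
have c_ge0 : 0 <= (1 - alpha) * phi N alpha by rewrite mulr_ge0 ?subr_ge0.
have excess_le := ler_wpM2l c_ge0 (interior n).
have slack : 4 * alpha * p n + (1 - alpha) * E n
               - (1 - alpha) * phi N alpha * (2 * (N%:R - 1) * p n + E n)
             = (8 * alpha * p n + (1 - alpha) ^+ 2 * (1 + N%:R) * E n)
               / ((1 + alpha) + (1 - alpha) * N%:R).
  by rewrite /phi; field; rewrite gt_eqF.
have slack_ge0 : 0 <= (8 * alpha * p n + (1 - alpha) ^+ 2 * (1 + N%:R) * E n)
                      / ((1 + alpha) + (1 - alpha) * N%:R).
  by rewrite divr_ge0 ?(ltW K_gt0) // addr_ge0 ?mulr_ge0 ?subr_ge0 ?addr_ge0 ?(ltW E_n_gt0).
have den_gt0 : 0 < 2 * (1 + alpha) by lra.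
have := mulr_ge0 c_ge0 excess_ge0.
rewrite /HP_target divr_ge0 ?ler_pdivrMr ?(ltW den_gt0) //=; nra.
Qed.

Lemma NE_HP_marginal (alpha : R) lP lO : 0 <= alpha ->
  is_NE (@bill_HP R N) alpha E p o lP lO -> forall n,
  (lP n < E n -> 0 <= (1 - alpha) * (agg lP - HP_peak alpha)
                      + (1 + alpha) * (lP n - HP_target alpha n)) /\
  (0 < lP n -> (1 - alpha) * (agg lP - HP_peak alpha)
                 + (1 + alpha) * (lP n - HP_target alpha n) <= 0).
Proof.
move=> alpha_ge0 ne n; have [feas _] := ne; have [_ [_ pE]] := pref n.
have [lE _] := feas n.
have agg_lO : agg lO = agg E - agg lP by rewrite -(NE_agg_load ne); ring.
have marginal_eq :
    (1 - alpha) * (agg lP + lP n - agg lO - lO n)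
      + 2 * alpha * (lP n - p n - (lO n - o n))
    = 2 * ((1 - alpha) * (agg lP - HP_peak alpha)
           + (1 + alpha) * (lP n - HP_target alpha n)).
  rewrite agg_lO -[lO n](addKr (lP n)) -[o n](addKr (p n)) lE pE.
  by rewrite /HP_peak /HP_target; field; rewrite gt_eqF //; lra.
have := NE_first_order ne (cost_shift_HP alpha E p o lP lO n).
by rewrite marginal_eq pmulr_rge0 ?pmulr_rle0.
Qed.

Lemma HP_peak_load (alpha : R) lP lO :
  (forall n, (agg p - agg o) - E n <= 2 * (N%:R - 1) * p n) -> 0 <= alpha <= 1 ->
  is_NE (@bill_HP R N) alpha E p o lP lO -> agg lP = HP_peak alpha.
Proof.
move=> interior alpha01 ne; have /andP[alpha_ge0 alpha_le1] := alpha01.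
apply: (@agg_eq_of_marginals _ _ (fun=> 1 - alpha) (1 + alpha)
          _ _ _ E lP (HP_target alpha)) => //.
- by move=> n; rewrite subr_ge0.
- by rewrite addr_ge0.
- by right; rewrite ltr_pwDl.
- by move=> n; apply: HP_target_bounds.
- exact: agg_HP_target.
- by move=> n; have [+ _] := NE_HP_marginal alpha_ge0 ne n.
- by move=> n; have [_ +] := NE_HP_marginal alpha_ge0 ne n.
Qed.

End TwoPeriodGame.

Theorem corollary3 (R : realFieldType) (N : nat) (E lhP lhO : 'I_N -> R) :
  (0 < N)%N ->
  (forall n, 0 < E n) ->
  (forall n, 0 <= lhP n /\ 0 <= lhO n /\ lhP n + lhO n = E n) ->
  agg lhP >= agg E / 2 -> agg E / 2 >= agg lhO ->
  ((forall n, lhP n / E n + 1 / 2 >= agg lhP / agg E) ->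
     forall alpha : R, 0 <= alpha <= 1 ->
     forall lP lO : 'I_N -> R, is_NE (@bill_DP R N) alpha E lhP lhO lP lO ->
       agg lP = agg E / 2 + alpha * ((agg lhP - agg lhO) / 2))
  /\
  ((forall n, 2 * (N%:R - 1) * lhP n >= (agg lhP - agg lhO) - E n) ->
     forall alpha : R, 0 <= alpha <= 1 ->
     forall lP lO : 'I_N -> R, is_NE (@bill_HP R N) alpha E lhP lhO lP lO ->
       agg lP = agg E / 2 + phi N alpha * ((agg lhP - agg lhO) / 2)).
Proof.
(* [agg lhO <= agg E / 2] follows from the other hypotheses. *)
move=> N_gt0 E_gt0 pref peak_pref _; split=> interior alpha alpha01 lP lO.
- exact: DP_peak_load.
- exact: HP_peak_load.
Qed.
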